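(* Fix a program in the first-order functional language described in the context, and a program point $\pi$ of an expression in it. Then $$\{\,s\in\{0,1\}^*\mid \mathcal S(L(M_\pi^{\{s\}}))\neq\emptyset\,\}\;=\;L(A^{\mathrm{comp}}_\pi)\,(0+1)^*.$$ Here $M_\pi^{\{s\}}$ is the Mohri–Nederhof regular approximation of the demand grammar $G_\pi^{\{s\}}$, $\mathcal S$ is the simplification function, and $A^{\mathrm{comp}}_\pi$ is the completing automaton of $\pi$.
   Context: Programs. A program consists of first-order function definitions $(\mathtt{define}\ (f\ z_1\ \dots\ z_n)\ e_f)$ and a main expression $e_{\mathrm{main}}$, which is treated as the body of a parameterless function $\mathrm{main}$. Programs are in administrative normal form and all variable names are distinct. The grammar is $e ::= (\mathtt{if}\ x\ e_1\ e_2) \mid (\mathtt{let}\ x \leftarrow s\ \mathtt{in}\ e) \mid (\mathtt{return}\ x)$, $s ::= k \mid \mathtt{nil} \mid (\mathtt{cons}\ x_1\ x_2) \mid (\mathtt{car}\ x) \mid (\mathtt{cdr}\ x) \mid (\mathtt{null?}\ x) \mid (+\ x_1\ x_2) \mid (f\ x_1 \dots x_n)$. Every expression, every application and every variable occurrence carries a distinct label $\pi$. Demands. Let $\Sigma=\{0,1,\bar0,\bar1,2\}$. A demand is a set of strings over $\Sigma$. For sets we write $\sigma_1\sigma_2=\{\alpha\beta\mid\alpha\in\sigma_1,\beta\in\sigma_2\}$ and $a\sigma=\{a\alpha\mid\alpha\in\sigma\}$. Demand analysis. Maps from program points to demands are combined by pointwise union. For applications, $\mathcal A(s,\sigma)$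 is: - for a constant or $\mathtt{nil}$: $\{\pi\mapsto\sigma\}$; - for $(\mathtt{null?}\ \pi_1{:}x)$: $\{\pi_1\mapsto2\sigma,\pi\mapsto\sigma\}$; - for $(+\ \pi_1{:}x\ \pi_2{:}y)$: $\{\pi_1\mapsto2\sigma,\pi_2\mapsto2\sigma,\pi\mapsto\sigma\}$; - for $(\mathtt{car}\ \pi_1{:}x)$: $\{\pi_1\mapsto2\sigma\cup0\sigma,\pi\mapsto\sigma\}$; - for $(\mathtt{cdr}\ \pi_1{:}x)$: $\{\pi_1\mapsto2\sigma\cup1\sigma,\pi\mapsto\sigma\}$; - for $(\mathtt{cons}\ \pi_1{:}x\ \pi_2{:}y)$: $\{\pi_1\mapsto\bar0\sigma,\pi_2\mapsto\bar1\sigma,\pi\mapsto\sigma\}$; - for $(f\ \pi_1{:}y_1\dots\pi_n{:}y_n)$: $\{\pi_i\mapsto L_f^i\sigma,\pi\mapsto\sigma\}$. For expressions, $\mathcal D$ is: - $\mathcal D(\pi{:}(\mathtt{return}\ \pi_1{:}x),\sigma)=\{\pi_1\mapsto\sigma,\pi\mapsto\sigma\}$; - $\mathcal D(\pi{:}(\mathtt{if}\ \pi_1{:}x\ e_1\ e_2),\sigma)=\mathcal D(e_1,\sigma)\cup\mathcal D(e_2,\sigma)\cup\{\pi_1\mapsto2\sigma,\pi\mapsto\sigma\}$; - $\mathcal D(\pi{:}(\mathtt{let}\ x\leftarrow s\ \mathtt{in}\ e),\sigma)=\mathcal A(s,\bigcup_{\pi'}DE(\pi'))\cup DE\cup\{\pi\mapsto\sigma\}$,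 where $DE=\mathcal D(e,\sigma)$ and $\pi'$ ranges over the occurrences of $x$ in $e$. Summaries and concrete demands. $L_f^i\subseteq\Sigma^*$ satisfies $L_f^i\sigma=\bigcup_{\pi'}\mathcal D(e_f,\sigma)(\pi')$ over occurrences $\pi'$ of the $i$-th parameter in $e_f$, for symbolic $\sigma$. The concrete demands are $\sigma_{\mathrm{main}}=$ the given set $\sigma$ of strings over $\{0,1\}$ (the slicing criterion), and $\sigma_f=$ the union of the demands on all call sites of $f$. The demand at $\pi$ in the body of $f$ is $D_\pi=\mathcal D(e_f,\sigma_f)(\pi)$. These equations form a context-free grammar over $\Sigma$ (least solution); $G_\pi^\sigma$ is this grammar with start symbol $D_\pi$. Mohri–Nederhof approximation. Consider each strongly connected component $N'$ of mutually recursive nonterminals whose productions are neither all right-linear nor all left-linear with respect to $N'$. For such a component, add a fresh nonterminal $A'$ for each $A\in N'$. Replace every production $A\to\alpha_0B_1\alpha_1\cdots B_m\alpha_m$ (with $A,B_j\in N'$, the $\alpha_j$ free of $N'$-nonterminals, $m\ge0$) by $A\to\alpha_0B_1,\ B_1'\to\alpha_1B_2,\dots,B_m'\to\alpha_mA'$ (for $m=0$: $A\to\alpha_0A'$), and add $A'\to\epsilon$ for each $A\in N'$. $M_\pi^\sigma$ is the resulting regular grammar/automaton obtained from $G_\pi^\sigma$, with language $L(M_\pi^\sigma)$. Simplification $\mathcal S$ (defined string-wise from the right and extended to sets by union): - $\mathcal S(\epsilon)=\{\epsilon\}$; - $\mathcal S(0w)=0\mathcal S(w)$ and $\mathcal S(1w)=1\mathcal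 S(w)$; - $\mathcal S(\bar0w)=\{\alpha\mid0\alpha\in\mathcal S(w)\}$ and $\mathcal S(\bar1w)=\{\alpha\mid1\alpha\in\mathcal S(w)\}$; - $\mathcal S(2w)=\emptyset$ if $\mathcal S(w)=\emptyset$, and $\{\epsilon\}$ otherwise. Canonicalization $\mathcal C$ (also string-wise from the right, extended by union): - $\mathcal C(\epsilon)=\{\epsilon\}$; - $\mathcal C(0w)=0\mathcal C(w)$, $\mathcal C(1w)=1\mathcal C(w)$, $\mathcal C(2w)=2\mathcal C(w)$; - $\mathcal C(\bar0w)=\{\bar0\mid\mathcal C(w)=\{\epsilon\}\}\cup\{\alpha\mid0\alpha\in\mathcal C(w)\}\cup\{\bar0\bar1\alpha\mid\bar1\alpha\in\mathcal C(w)\}\cup\{\bar0\bar0\alpha\mid\bar0\alpha\in\mathcal C(w)\}$; - $\mathcal C(\bar1w)=\{\bar1\mid\mathcal C(w)=\{\epsilon\}\}\cup\{\alpha\mid1\alpha\in\mathcal C(w)\}\cup\{\bar1\bar1\alpha\mid\bar1\alpha\in\mathcal C(w)\}\cup\{\bar1\bar0\alpha\mid\bar0\alpha\in\mathcal C(w)\}$. $A_\pi$ is an automaton accepting $\mathcal C(L(M_\pi^{\{\epsilon\}}))$. For $p\in\{\bar0,\bar1\}^*$, let $\overline{p}$ be the reverse of $p$ with $\bar0$ replaced by $0$ and $\bar1$ by $1$. The completing automaton $A^{\mathrm{comp}}_\pi$ is constructed from $A_\pi$ as follows: - take as final states the states reachable from the start state using only transitions labelled $0,1,2$; - reverse every $\bar0$-transition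 into a $0$-transition and every $\bar1$-transition into a $1$-transition, dropping all other transitions; - add a new start state with $\epsilon$-transitions to the old final states. Its language is $L(A^{\mathrm{comp}}_\pi)=\{\overline{p}\mid p\in\{\bar0,\bar1\}^*,\ \exists u\in\{0,1,2\}^*:\ up\in L(A_\pi)\}$. *)

From Stdlib Require Import List Relations Arith.
Import ListNotations.

(* ---------- Alphabet Sigma = {0,1,0bar,1bar,2} ---------- *)
Inductive Sig : Type := S0 | S1 | B0 | B1 | S2.

(* {0,1}-strings are lists of booleans: false = 0, true = 1 *)
Definition emb (b : bool) : Sig := if b then S1 else S0.

Definition label := nat.
Definition var := nat.
Definition fname := nat.

(* an application s; its own label is stored in the enclosing let *)
Inductive app : Type :=
| AConst (k : nat)
| ANil
| ACons (l1 : label) (x1 : var) (l2 : label) (x2 : var)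
| ACar (l1 : label) (x : var)
| ACdr (l1 : label) (x : var)
| ANull (l1 : label) (x : var)
| APlus (l1 : label) (x1 : var) (l2 : label) (x2 : var)
| ACall (f : fname) (args : list (label * var)).

(* EIf l l1 x e1 e2   = l:(if l1:x e1 e2)
   ELet l x ls s e    = l:(let x <- ls:s in e)
   EReturn l l1 x     = l:(return l1:x) *)
Inductive expr : Type :=
| EIf (l : label) (l1 : label) (x : var) (e1 e2 : expr)
| ELet (l : label) (x : var) (ls : label) (s : app) (e : expr)
| EReturn (l : label) (l1 : label) (x : var).

Record fundef : Type := { fd_name : fname; fd_params : list var; fd_body : expr }.
Record program : Type := { defs : list fundef; main : expr }.

Definition occ1 (x : var) (l : label) (y : var) : list label :=
  if Nat.eqb y x then [l] else [].

Definition app_occs (x : var) (s : app) : list label :=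
  match s with
  | ACons l1 x1 l2 x2 | APlus l1 x1 l2 x2 => occ1 x l1 x1 ++ occ1 x l2 x2
  | ACar l1 y | ACdr l1 y | ANull l1 y => occ1 x l1 y
  | ACall _ args => concat (map (fun p => occ1 x (fst p) (snd p)) args)
  | AConst _ | ANil => []
  end.

Fixpoint occs (x : var) (e : expr) : list label :=
  match e with
  | EIf _ l1 y e1 e2 => occ1 x l1 y ++ occs x e1 ++ occs x e2
  | ELet _ _ _ s e' => app_occs x s ++ occs x e'
  | EReturn _ l1 y => occ1 x l1 y
  end.

Inductive gsym (V : Type) : Type := Tm (a : Sig) | Nt (v : V).
Arguments Tm {V} a.
Arguments Nt {V} v.

Inductive derives {V : Type} (P : V -> list (gsym V) -> Prop) :
  list (gsym V) -> list Sig -> Prop :=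
| der_nil : derives P [] []
| der_tm a r w : derives P r w -> derives P (Tm a :: r) (a :: w)
| der_nt A rhs r w1 w2 :
    P A rhs -> derives P rhs w1 -> derives P r w2 ->
    derives P (Nt A :: r) (w1 ++ w2).

Definition lang {V : Type} (P : V -> list (gsym V) -> Prop) (A : V) (w : list Sig) : Prop :=
  derives P [Nt A] w.

(* Dc l : concrete demand D_l ; Ds l : symbolic demand (sigma := {eps}) at l
   inside a function body, used for the summaries; Lf f i : L_f^i (1-based);
   Sg (Some f) : sigma_f ; Sg None : sigma_main *)
Inductive nt : Type :=
| Dc (l : label) | Ds (l : label) | Lf (f : fname) (i : nat) | Sg (g : option fname).

Definition prod := (nt * list (gsym nt))%type.

Fixpoint call_prods (mk : label -> nt) (ls : label) (f : fname) (i : nat)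
  (args : list (label * var)) : list prod :=
  match args with
  | [] => []
  | (li, _) :: r => (mk li, [Nt (Lf f i); Nt (mk ls)]) :: call_prods mk ls f (S i) r
  end.

(* A(s, sigma') where sigma' is the nonterminal mk ls (demand at the application) *)
Definition app_prods (mk : label -> nt) (ls : label) (s : app) : list prod :=
  match s with
  | AConst _ | ANil => []
  | ANull l1 _ => [(mk l1, [Tm S2; Nt (mk ls)])]
  | APlus l1 _ l2 _ => [(mk l1, [Tm S2; Nt (mk ls)]); (mk l2, [Tm S2; Nt (mk ls)])]
  | ACar l1 _ => [(mk l1, [Tm S2; Nt (mk ls)]); (mk l1, [Tm S0; Nt (mk ls)])]
  | ACdr l1 _ => [(mk l1, [Tm S2; Nt (mk ls)]); (mk l1, [Tm S1; Nt (mk ls)])]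
  | ACons l1 _ l2 _ => [(mk l1, [Tm B0; Nt (mk ls)]); (mk l2, [Tm B1; Nt (mk ls)])]
  | ACall f args => call_prods mk ls f 1 args
  end.

(* D(e, sigma) where sigma is the symbol string tl *)
Fixpoint expr_prods (mk : label -> nt) (tl : list (gsym nt)) (e : expr) : list prod :=
  match e with
  | EReturn l l1 _ => [(mk l, tl); (mk l1, tl)]
  | EIf l l1 _ e1 e2 =>
      (mk l, tl) :: (mk l1, Tm S2 :: tl) :: expr_prods mk tl e1 ++ expr_prods mk tl e2
  | ELet l x ls s e' =>
      (mk l, tl) :: map (fun p => (mk ls, [Nt (mk p)])) (occs x e')
        ++ app_prods mk ls s ++ expr_prods mk tl e'
  end.

Fixpoint param_prods (f : fname) (body : expr) (i : nat) (ps : list var) : list prod :=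
  match ps with
  | [] => []
  | z :: r => map (fun p => (Lf f i, [Nt (Ds p)])) (occs z body) ++ param_prods f body (S i) r
  end.

(* call sites: (callee, label of the application, number of arguments) *)
Definition app_calls (ls : label) (s : app) : list (fname * label * nat) :=
  match s with
  | ACall f args => [(f, ls, length args)]
  | _ => []
  end.

Fixpoint calls (e : expr) : list (fname * label * nat) :=
  match e with
  | EIf _ _ _ e1 e2 => calls e1 ++ calls e2
  | ELet _ _ ls s e' => app_calls ls s ++ calls e'
  | EReturn _ _ _ => []
  end.

Definition all_calls (p : program) : list (fname * label * nat) :=
  concat (map (fun d => calls (fd_body d)) (defs p)) ++ calls (main p).

Definition grammar (p : program) (sigma : list (list Sig)) : list prod :=
  concat (map (fun d =>
      expr_prods Dc [Nt (Sg (Some (fd_name d)))] (fd_body d)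
      ++ expr_prods Ds [] (fd_body d)
      ++ param_prods (fd_name d) (fd_body d) 1 (fd_params d)) (defs p))
  ++ expr_prods Dc [Nt (Sg None)] (main p)
  ++ map (fun c => (Sg (Some (fst (fst c))), [Nt (Dc (snd (fst c)))])) (all_calls p)
  ++ map (fun s => (Sg None, map Tm s)) sigma.

Definition G (p : program) (sigma : list (list Sig)) (A : nt) (rhs : list (gsym nt)) : Prop :=
  In (A, rhs) (grammar p sigma).

Definition edge {V : Type} (P : V -> list (gsym V) -> Prop) (A B : V) : Prop :=
  exists r, P A r /\ In (Nt B) r.

Definition reach {V : Type} (P : V -> list (gsym V) -> Prop) : relation V :=
  clos_refl_trans V (edge P).

Definition scc {V : Type} (P : V -> list (gsym V) -> Prop) (A B : V) : Prop :=
  reach P A B /\ reach P B A.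

Definition rightlin {V : Type} (C : V -> Prop) (r : list (gsym V)) : Prop :=
  forall a B b, r = a ++ Nt B :: b -> C B -> b = [].
Definition leftlin {V : Type} (C : V -> Prop) (r : list (gsym V)) : Prop :=
  forall a B b, r = a ++ Nt B :: b -> C B -> a = [].

Definition nonlinear_comp {V : Type} (P : V -> list (gsym V) -> Prop) (A : V) : Prop :=
  ~ (forall X r, scc P A X -> P X r -> rightlin (scc P A) r) /\
  ~ (forall X r, scc P A X -> P X r -> leftlin (scc P A) r).

Definition noC {V : Type} (C : V -> Prop) (a : list (gsym V)) : Prop :=
  forall B, In (Nt B) a -> ~ C B.

Definition decomp {V : Type} (C : V -> Prop) (r : list (gsym V))
  (a0 : list (gsym V)) (bs : list (V * list (gsym V))) : Prop :=
  r = a0 ++ concat (map (fun q => Nt (fst q) :: snd q) bs) /\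
  noC C a0 /\ Forall (fun q => C (fst q) /\ noC C (snd q)) bs.

(* nonterminal (A,false) is A, (A,true) is the fresh A' *)
Definition lift {V : Type} (r : list (gsym V)) : list (gsym (V * bool)) :=
  map (fun s => match s with Tm a => Tm a | Nt v => Nt (v, false) end) r.

Fixpoint mn_chain {V : Type} (src : V * bool) (body : list (gsym V))
  (bs : list (V * list (gsym V))) (A : V) : list ((V * bool) * list (gsym (V * bool))) :=
  match bs with
  | [] => [(src, lift body ++ [Nt (A, true)])]
  | (B, al) :: bs' => (src, lift body ++ [Nt (B, false)]) :: mn_chain (B, true) al bs' A
  end.

Definition mn {V : Type} (P : V -> list (gsym V) -> Prop)
  (X : V * bool) (rhs : list (gsym (V * bool))) : Prop :=
  (snd X = false /\ ~ nonlinear_comp P (fst X) /\ exists r, P (fst X) r /\ rhs = lift r)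
  \/ (exists A r a0 bs, nonlinear_comp P A /\ P A r /\ decomp (scc P A) r a0 bs /\
        In (X, rhs) (mn_chain (A, false) a0 bs A))
  \/ (snd X = true /\ nonlinear_comp P (fst X) /\ rhs = []).

Definition LM (p : program) (sigma : list (list Sig)) (pi : label) (w : list Sig) : Prop :=
  lang (mn (G p sigma)) (Dc pi, false) w.

Fixpoint simp (w : list Sig) : list Sig -> Prop :=
  match w with
  | [] => fun a => a = []
  | S0 :: w' => fun a => exists b, a = S0 :: b /\ simp w' b
  | S1 :: w' => fun a => exists b, a = S1 :: b /\ simp w' b
  | B0 :: w' => fun a => simp w' (S0 :: a)
  | B1 :: w' => fun a => simp w' (S1 :: a)
  | S2 :: w' => fun a => a = [] /\ exists b, simp w' b
  end.

Definition simpL (L : list Sig -> Prop) (a : list Sig) : Prop :=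
  exists w, L w /\ simp w a.

Fixpoint canon (w : list Sig) : list Sig -> Prop :=
  match w with
  | [] => fun a => a = []
  | S0 :: w' => fun a => exists b, a = S0 :: b /\ canon w' b
  | S1 :: w' => fun a => exists b, a = S1 :: b /\ canon w' b
  | S2 :: w' => fun a => exists b, a = S2 :: b /\ canon w' b
  | B0 :: w' => fun a =>
      ((forall b, canon w' b <-> b = []) /\ a = [B0])
      \/ canon w' (S0 :: a)
      \/ (exists al, a = B0 :: B1 :: al /\ canon w' (B1 :: al))
      \/ (exists al, a = B0 :: B0 :: al /\ canon w' (B0 :: al))
  | B1 :: w' => fun a =>
      ((forall b, canon w' b <-> b = []) /\ a = [B1])
      \/ canon w' (S1 :: a)
      \/ (exists al, a = B1 :: B1 :: al /\ canon w' (B1 :: al))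
      \/ (exists al, a = B1 :: B0 :: al /\ canon w' (B0 :: al))
  end.

Definition LA (p : program) (pi : label) (a : list Sig) : Prop :=
  exists w, LM p [[]] pi w /\ canon w a.

Definition unbar (x : Sig) : Sig := match x with B0 => S0 | B1 => S1 | y => y end.
Definition overline (p : list Sig) : list Sig := rev (map unbar p).
Definition isbar (x : Sig) : Prop := x = B0 \/ x = B1.
Definition isplain (x : Sig) : Prop := x = S0 \/ x = S1 \/ x = S2.

Definition Lcomp (p : program) (pi : label) (t : list bool) : Prop :=
  exists q u, Forall isbar q /\ Forall isplain u /\ LA p pi (u ++ q) /\
              map emb t = overline q.

Definition app_labels (s : app) : list label :=
  match s with
  | ACons l1 _ l2 _ | APlus l1 _ l2 _ => [l1; l2]
  | ACar l1 _ | ACdr l1 _ | ANull l1 _ => [l1]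
  | ACall _ args => map fst args
  | AConst _ | ANil => []
  end.

Fixpoint expr_labels (e : expr) : list label :=
  match e with
  | EIf l l1 _ e1 e2 => l :: l1 :: expr_labels e1 ++ expr_labels e2
  | ELet l _ ls s e' => l :: ls :: app_labels s ++ expr_labels e'
  | EReturn l l1 _ => [l; l1]
  end.

Definition prog_labels (p : program) : list label :=
  concat (map (fun d => expr_labels (fd_body d)) (defs p)) ++ expr_labels (main p).

Fixpoint binders (e : expr) : list var :=
  match e with
  | EIf _ _ _ e1 e2 => binders e1 ++ binders e2
  | ELet _ x _ _ e' => x :: binders e'
  | EReturn _ _ _ => []
  end.

Definition prog_vars (p : program) : list var :=
  concat (map (fun d => fd_params d ++ binders (fd_body d)) (defs p)) ++ binders (main p).

Definition app_vars (s : app) : list var :=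
  match s with
  | ACons _ x1 _ x2 | APlus _ x1 _ x2 => [x1; x2]
  | ACar _ x | ACdr _ x | ANull _ x => [x]
  | ACall _ args => map snd args
  | AConst _ | ANil => []
  end.

Fixpoint scoped (env : list var) (e : expr) : Prop :=
  match e with
  | EIf _ _ x e1 e2 => In x env /\ scoped env e1 /\ scoped env e2
  | ELet _ x _ s e' => (forall y, In y (app_vars s) -> In y env) /\ scoped (x :: env) e'
  | EReturn _ _ x => In x env
  end.

Definition wf_program (p : program) : Prop :=
  NoDup (prog_labels p) /\
  NoDup (prog_vars p) /\
  NoDup (map fd_name (defs p)) /\
  (forall d, In d (defs p) -> scoped (fd_params d) (fd_body d)) /\
  scoped [] (main p) /\
  (forall f l n, In (f, l, n) (all_calls p) ->
     exists d, In d (defs p) /\ fd_name d = f /\ length (fd_params d) = n).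

(* The demand [sigma] enters the demand grammar only through the productions
   [sigma_main -> s], [s] in [sigma].  Above the symbolic nonterminals (demands [Ds] and
   summaries [L_f^i]), the nonterminals carrying concrete demands ([D_pi], [sigma_f]) form
   a layer whose productions end in exactly one concrete nonterminal.  Hence no concrete
   nonterminal lies in a component that Mohri-Nederhof rewrites, and the approximation
   satisfies L(M_pi^{s}) = L(M_pi^{eps}) s.  Simplification factors through
   canonicalization, S(w x) = S(C(w) x); a canonical word is u q with u in {0,1,2}* and q in
   {0bar,1bar}*, the plain prefix u never makes S empty, and S(q s) is nonempty exactly when
   the reversed unbarred q is a prefix of s. *)

From Stdlib Require Import List Relations Classical FunctionalExtensionality PropExtensionality.
Import ListNotations.

(** * Simplification and canonicalization *)

Lemma canon_functional w a b : canon w a -> canon w b -> a = b.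
Proof.
  revert a b; induction w as [|x w IH]; simpl; intros a b Ha Hb; [congruence|].
  destruct x; simpl in Ha, Hb.
  1,2,5: destruct Ha as [a' [-> Ha]], Hb as [b' [-> Hb]]; f_equal; eauto.
  all: destruct Ha as [[Ha ->]|[Ha|[[al [-> Ha]]|[al [-> Ha]]]]];
       destruct Hb as [[Hb ->]|[Hb|[[bl [-> Hb]]|[bl [-> Hb]]]]];
       try reflexivity;
       try (apply Ha in Hb; discriminate);
       try (apply Hb in Ha; discriminate);
       specialize (IH _ _ Ha Hb); congruence.
Qed.

Definition plain_bar (c : list Sig) : Prop :=
  exists u q, c = u ++ q /\ Forall isplain u /\ Forall isbar q.

Lemma plain_bar_cons_plain x c : isplain x -> plain_bar c -> plain_bar (x :: c).
Proof. intros Hx [u [q [-> [Hu Hq]]]]. exists (x :: u), q. auto. Qed.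

Lemma plain_bar_bars q : Forall isbar q -> plain_bar q.
Proof. intros Hq. exists [], q. auto. Qed.

Lemma plain_bar_tail x c : plain_bar (x :: c) -> plain_bar c.
Proof.
  intros [[|y u] [q [E [Hu Hq]]]]; simpl in E; subst.
  - inversion Hq; subst. now apply plain_bar_bars.
  - injection E as -> ->. inversion Hu. now exists u, q.
Qed.

Lemma plain_bar_bar_head x c : isbar x -> plain_bar (x :: c) -> Forall isbar (x :: c).
Proof.
  intros Hx [[|y u] [q [E [Hu Hq]]]]; simpl in E; subst; [exact Hq|].
  injection E as -> _. inversion Hu as [|? ? Hy]; subst.
  destruct Hx as [->| ->]; destruct Hy as [E|[E|E]]; discriminate.
Qed.

Lemma canon_plain_bar w c : canon w c -> plain_bar c.
Proof.
  revert c; induction w as [|x w IH]; simpl; intros c Hc.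
  - subst. now apply plain_bar_bars.
  - destruct x; simpl in Hc.
    1,2,5: destruct Hc as [b [-> Hb]]; apply plain_bar_cons_plain; [unfold isplain; auto | auto].
    all: destruct Hc as [[_ ->]|[Hc|[[al [-> Hc]]|[al [-> Hc]]]]];
         [ apply plain_bar_bars; constructor; [unfold isbar; auto | constructor]
         | exact (plain_bar_tail _ _ (IH _ Hc))
         | apply plain_bar_bars; constructor; [unfold isbar; auto|];
           eapply plain_bar_bar_head; [|exact (IH _ Hc)]; unfold isbar; auto .. ].
Qed.

Definition bar_of (b : bool) : Sig := if b then B1 else B0.

Lemma simp_bar_of_cons b w a : simp (bar_of b :: w) a = simp w (emb b :: a).
Proof. now destruct b. Qed.

Lemma canon_bar_of_cons b w a :
  canon (bar_of b :: w) a <->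
  ((forall c, canon w c <-> c = []) /\ a = [bar_of b])
  \/ canon w (emb b :: a)
  \/ (exists al, a = bar_of b :: B1 :: al /\ canon w (B1 :: al))
  \/ (exists al, a = bar_of b :: B0 :: al /\ canon w (B0 :: al)).
Proof. now destruct b. Qed.

Lemma simp_app_canon_bar_of b w x :
  (forall a, simp (w ++ x) a <-> exists c, canon w c /\ simp (c ++ x) a) ->
  forall a, simp (bar_of b :: w ++ x) a <-> exists c, canon (bar_of b :: w) c /\ simp (c ++ x) a.
Proof.
  intros IH a. rewrite simp_bar_of_cons, IH. split.
  - intros [[|y c] [Hc Hs]].
    + exists [bar_of b]. split.
      * apply canon_bar_of_cons. left. split; [|reflexivity].
        intros c; split; [intros Hc'; exact (canon_functional _ _ _ Hc' Hc) | now intros ->].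
      * cbn [app]. now rewrite simp_bar_of_cons.
    + destruct y; simpl in Hs.
      1,2: destruct Hs as [a' [E Hs]]; destruct b; simpl in E; inversion E; subst;
           exists c; split; [apply canon_bar_of_cons; right; left; exact Hc | exact Hs].
      1,2: eexists; split;
           [apply canon_bar_of_cons; right; right; solve [left; eauto | right; eauto]
           | cbn [app]; rewrite simp_bar_of_cons; exact Hs].
      destruct Hs as [E _]; discriminate.
  - intros [c [Hc Hs]]. apply canon_bar_of_cons in Hc.
    destruct Hc as [[Hc ->]|[Hc|[[al [-> Hc]]|[al [-> Hc]]]]].
    + exists []. split; [now apply Hc|]. cbn [app] in Hs. now rewrite simp_bar_of_cons in Hs.
    + exists (emb b :: c). split; [exact Hc|]. destruct b; now exists a.
    + exists (B1 :: al). split; [exact Hc|]. cbn [app] in Hs. now rewrite simp_bar_of_cons in Hs.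
    + exists (B0 :: al). split; [exact Hc|]. cbn [app] in Hs. now rewrite simp_bar_of_cons in Hs.
Qed.

Lemma simp_app_canon w x a : simp (w ++ x) a <-> exists c, canon w c /\ simp (c ++ x) a.
Proof.
  revert a; induction w as [|y w IH]; intros a.
  - split; [intros H; now exists [] | now intros [c [-> H]]].
  - destruct y; [| |exact (simp_app_canon_bar_of false w x IH a)
                   |exact (simp_app_canon_bar_of true w x IH a)|]; simpl.
    1,2: split; [ intros [b [-> Hb]]; apply IH in Hb; destruct Hb as [c [Hc Hs]];
                  eexists; split; [now exists c | now exists b]
                | intros [c [[b [-> Hb]] [b' [-> Hs]]]]; exists b'; split; [reflexivity|];
                  apply IH; now exists b ].
    split.
    + intros [-> [b Hb]]. apply IH in Hb. destruct Hb as [c [Hc Hs]].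
      exists (S2 :: c). split; [now exists c | split; eauto].
    + intros [c [[b [-> Hb]] [-> [b' Hs]]]]. split; [reflexivity|].
      exists b'. apply IH. now exists b.
Qed.

Lemma simp_plain_app_nonempty u y : Forall isplain u ->
  (exists a, simp (u ++ y) a) <-> (exists a, simp y a).
Proof.
  induction 1 as [|x u Hx Hu IH]; [reflexivity|]. rewrite <- IH.
  destruct Hx as [->|[->| ->]]; simpl; split.
  1,3: intros [a [b [_ Hb]]]; now exists b.
  1,2: intros [b Hb]; eexists; now exists b.
  - intros [a [_ H]]. exact H.
  - intros H. now exists [].
Qed.

Lemma simp_bars_app q y a : Forall isbar q ->
  simp (q ++ y) a <-> simp y (overline q ++ a).
Proof.
  intros Hq; revert a; induction Hq as [|x q Hx Hq IH]; intros a; [reflexivity|].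
  unfold overline; simpl. rewrite <- app_assoc.
  destruct Hx as [-> | ->]; apply IH.
Qed.

Lemma simp_map_emb s b : simp (map emb s) b <-> b = map emb s.
Proof.
  revert b; induction s as [|x s IH]; intros b; [reflexivity|].
  destruct x; simpl; split.
  1,3: intros [b' [-> H]]; apply IH in H; now subst.
  all: intros ->; exists (map emb s); split; [reflexivity | now apply IH].
Qed.

Lemma simp_bars_map_emb_nonempty q s : Forall isbar q ->
  (exists a, simp (q ++ map emb s) a) <->
  (exists t u, s = t ++ u /\ map emb t = overline q).
Proof.
  intros Hq. split.
  - intros [a Ha]. apply simp_bars_app, simp_map_emb in Ha; [|exact Hq].
    destruct (map_eq_app _ _ _ _ (eq_sym Ha)) as [t [u [-> [Ht _]]]]. now exists t, u.
  - intros [t [u [-> Ht]]]. exists (map emb u).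
    apply simp_bars_app; [exact Hq|]. apply simp_map_emb. now rewrite map_app, Ht.
Qed.

(** * Concrete layers of a grammar *)

Definition nt_free {V : Type} (r : list (gsym V)) : Prop := forall B, ~ In (Nt B) r.

Definition conc_free {V : Type} (conc : V -> bool) (r : list (gsym V)) : Prop :=
  forall B, In (Nt B) r -> conc B = false.

Definition tail_linear {V : Type} (conc : V -> bool) (A : V) (r : list (gsym V)) : Prop :=
  if conc A then exists al Y, r = al ++ [Nt Y] /\ conc_free conc al /\ conc Y = true
  else conc_free conc r.

Lemma nt_free_map_Tm {V : Type} s : @nt_free V (map Tm s).
Proof. intros B HB. apply in_map_iff in HB as [a [E _]]. discriminate. Qed.

Lemma conc_free_app {V : Type} (conc : V -> bool) a b :
  conc_free conc (a ++ b) <-> conc_free conc a /\ conc_free conc b.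
Proof.
  unfold conc_free. setoid_rewrite in_app_iff. firstorder.
Qed.

Lemma nt_free_conc_free {V : Type} (conc : V -> bool) r : nt_free r -> conc_free conc r.
Proof. intros Hr B HB. destruct (Hr B HB). Qed.

Lemma tail_linear_snoc {V : Type} (conc : V -> bool) A al Y :
  conc_free conc al -> conc Y = conc A -> tail_linear conc A (al ++ [Nt Y]).
Proof.
  intros Hal HY. unfold tail_linear. rewrite <- HY. destruct (conc Y) eqn:EY.
  - now exists al, Y.
  - apply conc_free_app. split; [exact Hal|]. now intros B [[= <-]|[]].
Qed.

Lemma tail_linear_single {V : Type} (conc : V -> bool) A Y :
  conc Y = conc A -> tail_linear conc A [Nt Y].
Proof. apply (tail_linear_snoc conc A []). intros B []. Qed.

Lemma tail_linear_cons_Tm {V : Type} (conc : V -> bool) A a r :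
  tail_linear conc A r -> tail_linear conc A (Tm a :: r).
Proof.
  unfold tail_linear. destruct (conc A).
  - intros [al [Y [-> [Hal HY]]]]. exists (Tm a :: al), Y. split; [reflexivity|].
    split; [|exact HY]. intros B [E|HB]; [discriminate | auto].
  - intros Hr B [E|HB]; [discriminate | auto].
Qed.

Lemma snoc_eq_conc_free {V : Type} (conc : V -> bool) (al a b : list (gsym V)) Y B :
  al ++ [Nt Y] = a ++ Nt B :: b -> conc_free conc al -> conc B = true -> b = [].
Proof.
  intros E Hal HB. destruct b as [|x b] using rev_ind; [reflexivity|].
  rewrite app_comm_cons, app_assoc in E. apply app_inj_tail in E as [-> _].
  rewrite Hal in HB; [discriminate | apply in_elt].
Qed.

Lemma in_lift {V : Type} (r : list (gsym V)) y :
  In (Nt y) (lift r) -> exists v, y = (v, false) /\ In (Nt v) r.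
Proof.
  unfold lift. rewrite in_map_iff. intros [[a|v] [E H]]; [discriminate|].
  injection E as <-. eauto.
Qed.

Lemma conc_free_lift {V : Type} (conc : V -> bool) r :
  conc_free conc r -> conc_free (fun y => conc (fst y)) (lift r).
Proof. intros Hr y Hy. apply in_lift in Hy as [v [-> Hv]]. exact (Hr v Hv). Qed.

Lemma tail_linear_lift {V : Type} (conc : V -> bool) A r :
  tail_linear conc A r -> tail_linear (fun y => conc (fst y)) (A, false) (lift r).
Proof.
  unfold tail_linear; simpl. destruct (conc A).
  - intros [al [Y [-> [Hal HY]]]]. exists (lift al), (Y, false).
    split; [unfold lift; now rewrite map_app|]. split; [now apply conc_free_lift | exact HY].
  - apply conc_free_lift.
Qed.

Lemma lift_map_Tm {V : Type} s : @lift V (map Tm s) = map Tm s.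
Proof. unfold lift. now rewrite map_map. Qed.

Section ConcreteLayer.

Variables (V : Type) (conc : V -> bool) (P : V -> list (gsym V) -> Prop).
Hypothesis P_layered : forall A r, P A r -> nt_free r \/ tail_linear conc A r.

Lemma prod_conc_free A r : P A r -> conc A = false -> conc_free conc r.
Proof.
  intros Hr HA. destruct (P_layered A r Hr) as [Hf|Ht]; [now apply nt_free_conc_free|].
  unfold tail_linear in Ht. now rewrite HA in Ht.
Qed.

Lemma reach_nonconc X Y : reach P X Y -> conc X = false -> conc Y = false.
Proof.
  induction 1 as [X Y [r [Hr HY]]| |]; auto.
  intros HX. exact (prod_conc_free X r Hr HX Y HY).
Qed.

Lemma scc_conc A X : conc A = true -> scc P A X -> conc X = true.
Proof.
  intros HA [_ HXA]. destruct (conc X) eqn:EX; [reflexivity|].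
  now rewrite (reach_nonconc X A HXA EX) in HA.
Qed.

Lemma nonlinear_comp_nonconc A : nonlinear_comp P A -> conc A = false.
Proof.
  intros [Hright _]. destruct (conc A) eqn:EA; [exfalso|reflexivity].
  apply Hright. intros X r HX Hr a B b E HB.
  destruct (P_layered X r Hr) as [Hf|Ht].
  - destruct (Hf B). rewrite E. apply in_elt.
  - unfold tail_linear in Ht. rewrite (scc_conc A X EA HX) in Ht.
    destruct Ht as [al [Y [Er [Hal _]]]]. rewrite Er in E.
    exact (snoc_eq_conc_free conc al a b Y B E Hal (scc_conc A B EA HB)).
Qed.

Lemma mn_chain_nonconc src body bs A X rhs :
  conc (fst src) = false -> conc A = false ->
  conc_free conc (body ++ concat (map (fun q => Nt (fst q) :: snd q) bs)) ->
  In (X, rhs) (mn_chain src body bs A) ->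
  conc (fst X) = false /\ conc_free (fun y => conc (fst y)) rhs.
Proof.
  revert src body; induction bs as [|[B al] bs IH]; simpl; intros src body Hsrc HA Hfree Hin.
  - destruct Hin as [[= <- <-]|[]]. split; [exact Hsrc|].
    rewrite app_nil_r in Hfree. apply conc_free_app. split; [now apply conc_free_lift|].
    intros y [[= <-]|[]]. exact HA.
  - apply conc_free_app in Hfree as [Hbody Hrest].
    assert (HB : conc B = false) by (apply Hrest; now left).
    destruct Hin as [[= <- <-]|Hin].
    + split; [exact Hsrc|]. apply conc_free_app. split; [now apply conc_free_lift|].
      intros y [[= <-]|[]]. exact HB.
    + apply (IH (B, true) al); auto. intros y Hy. apply Hrest. now right.
Qed.

Lemma mn_cases X rhs : mn P X rhs ->
  (snd X = false /\ ~ nonlinear_comp P (fst X) /\ exists r, P (fst X) r /\ rhs = lift r)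
  \/ (conc (fst X) = false /\ conc_free (fun y => conc (fst y)) rhs).
Proof.
  intros [Hfirst|[[A [r [a0 [bs [Hnl [Hr [[-> _] Hin]]]]]]]|[_ [Hnl ->]]]].
  - now left.
  - right. apply nonlinear_comp_nonconc in Hnl.
    exact (mn_chain_nonconc (A, false) _ _ _ _ _ Hnl Hnl (prod_conc_free _ _ Hr Hnl) Hin).
  - right. split; [now apply nonlinear_comp_nonconc | intros y []].
Qed.

End ConcreteLayer.

Lemma reach_from_sink {V : Type} (P : V -> list (gsym V) -> Prop) A X :
  (forall r, P A r -> nt_free r) -> reach P A X -> X = A.
Proof.
  intros Hsink H. apply clos_rt_rt1n in H.
  destruct H as [|Y X [r [Hr HY]] _]; [reflexivity|]. destruct (Hsink r Hr Y HY).
Qed.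

Lemma sink_not_nonlinear_comp {V : Type} (P : V -> list (gsym V) -> Prop) A :
  (forall r, P A r -> nt_free r) -> ~ nonlinear_comp P A.
Proof.
  intros Hsink [Hright _]. apply Hright. intros X r [HAX _] Hr a B b E.
  rewrite (reach_from_sink P A X Hsink HAX) in Hr.
  destruct (Hsink r Hr B). rewrite E. apply in_elt.
Qed.

Section Agreement.

Variables (V : Type) (z : V) (P1 P2 : V -> list (gsym V) -> Prop).
Hypothesis agree : forall A r, A <> z -> P1 A r <-> P2 A r.
Hypothesis z_free1 : forall r, P1 z r -> nt_free r.
Hypothesis z_free2 : forall r, P2 z r -> nt_free r.

Lemma prods_agree (S : V -> Prop) (F : list (gsym V) -> Prop) :
  (forall r, nt_free r -> F r) ->
  (forall X r, S X -> P1 X r -> F r) <-> (forall X r, S X -> P2 X r -> F r).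
Proof.
  intros HF. split; intros H X r HS Hr; destruct (classic (X = z)) as [->|Hne].
  - exact (HF r (z_free2 r Hr)).
  - exact (H X r HS (proj2 (agree X r Hne) Hr)).
  - exact (HF r (z_free1 r Hr)).
  - exact (H X r HS (proj1 (agree X r Hne) Hr)).
Qed.

Lemma edge_agree : edge P1 = edge P2.
Proof.
  apply functional_extensionality; intro A. apply functional_extensionality; intro B.
  apply propositional_extensionality. unfold edge.
  destruct (classic (A = z)) as [->|Hne].
  - split; intros [r [Hr HB]]; exfalso; [exact (z_free1 r Hr B HB) | exact (z_free2 r Hr B HB)].
  - split; intros [r [Hr HB]]; exists r; split; auto; now apply agree.
Qed.

Lemma scc_agree : scc P1 = scc P2.
Proof. unfold scc, reach. now rewrite edge_agree. Qed.

Lemma nonlinear_comp_agree A : nonlinear_comp P1 A <-> nonlinear_comp P2 A.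
Proof.
  unfold nonlinear_comp. rewrite scc_agree.
  rewrite (prods_agree (scc P2 A) (rightlin (scc P2 A))),
          (prods_agree (scc P2 A) (leftlin (scc P2 A))); [reflexivity| |];
    intros r Hr a B b E; destruct (Hr B); rewrite E; apply in_elt.
Qed.

Lemma mn_agree X rhs : fst X <> z -> mn P1 X rhs -> mn P2 X rhs.
Proof.
  intros HX [[Hs [Hnl [r [Hr ->]]]]|[[A [r [a0 [bs [Hnl [Hr [Hd Hin]]]]]]]|[Hs [Hnl ->]]]].
  - left. rewrite <- nonlinear_comp_agree. repeat split; auto.
    exists r. split; [now apply agree | reflexivity].
  - right; left. exists A, r, a0, bs.
    assert (HA : A <> z) by (intros ->; exact (sink_not_nonlinear_comp P1 z z_free1 Hnl)).
    rewrite <- nonlinear_comp_agree, <- scc_agree, <- agree by exact HA. auto.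
  - right; right. rewrite <- nonlinear_comp_agree. auto.
Qed.

End Agreement.

Lemma derives_map_Tm {V : Type} (M : V -> list (gsym V) -> Prop) s w :
  derives M (map Tm s) w <-> w = s.
Proof.
  revert w; induction s as [|a s IH]; intros w; split; simpl.
  - now inversion 1.
  - intros ->. constructor.
  - inversion 1; subst. f_equal. now apply IH.
  - intros ->. constructor. now apply IH.
Qed.

Lemma derives_nt {V : Type} (M : V -> list (gsym V) -> Prop) A rhs w :
  M A rhs -> derives M rhs w -> derives M [Nt A] w.
Proof.
  intros HA Hw. rewrite <- (app_nil_r w). exact (der_nt M A rhs [] w [] HA Hw (der_nil M)).
Qed.

Section SuffixTransfer.

Variables (V : Type) (conc : V -> bool) (z : V) (s1 s2 : list Sig).
Variables M1 M2 : V -> list (gsym V) -> Prop.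
Hypothesis z_conc : conc z = true.
Hypothesis M1_cases : forall X r, M1 X r ->
  (X = z /\ r = map Tm s1) \/ (M2 X r /\ tail_linear conc X r).
Hypothesis M2_z : M2 z (map Tm s2).

Lemma derives_conc_free xs w : derives M1 xs w -> conc_free conc xs -> derives M2 xs w.
Proof.
  induction 1 as [|a r w _ IH|A rhs r w1 w2 HA _ IH1 _ IH2]; intros Hfree.
  - constructor.
  - constructor. apply IH. intros B HB. apply Hfree. now right.
  - assert (cA : conc A = false) by (apply Hfree; now left).
    destruct (M1_cases A rhs HA) as [[-> _]|[HA2 Ht]]; [congruence|].
    unfold tail_linear in Ht. rewrite cA in Ht.
    apply der_nt with rhs; [exact HA2 | now apply IH1 |].
    apply IH2. intros B HB. apply Hfree. now right.
Qed.

Lemma derives_conc_tail xs w : derives M1 xs w ->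
  forall al Y, xs = al ++ [Nt Y] -> conc_free conc al -> conc Y = true ->
  exists k, w = k ++ s1 /\ derives M2 xs (k ++ s2).
Proof.
  induction 1 as [|a r w _ IH|A rhs r w1 w2 HA Hd1 IH1 Hd2 IH2];
    intros [|x al] Y E Hal HY; inversion E; subst.
  - destruct (IH al Y eq_refl) as [k [-> Hk]]; [intros B HB; apply Hal; now right | exact HY |].
    exists (a :: k). split; [reflexivity | now constructor].
  - inversion Hd2; subst. rewrite app_nil_r.
    destruct (M1_cases Y rhs HA) as [[-> ->]|[HY2 Ht]].
    + apply derives_map_Tm in Hd1 as ->. exists []. split; [reflexivity|].
      apply derives_nt with (map Tm s2); [exact M2_z | now apply derives_map_Tm].
    + unfold tail_linear in Ht. rewrite HY in Ht. destruct Ht as [al' [Y' [-> [Hal' HY']]]].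
      destruct (IH1 al' Y' eq_refl Hal' HY') as [k [-> Hk]].
      exists k. split; [reflexivity|]. exact (derives_nt M2 Y _ _ HY2 Hk).
  - assert (cA : conc A = false) by (apply Hal; now left).
    destruct (M1_cases A rhs HA) as [[-> _]|[HA2 Ht]]; [congruence|].
    unfold tail_linear in Ht. rewrite cA in Ht.
    destruct (IH2 al Y eq_refl) as [k [-> Hk]]; [intros B HB; apply Hal; now right | exact HY |].
    exists (w1 ++ k). split; [apply app_assoc|]. rewrite <- app_assoc.
    apply der_nt with rhs; [exact HA2 | now apply derives_conc_free | exact Hk].
Qed.

Lemma lang_conc_suffix Y w : conc Y = true -> lang M1 Y w ->
  exists k, w = k ++ s1 /\ lang M2 Y (k ++ s2).
Proof.
  intros HY H. apply (derives_conc_tail [Nt Y] w H [] Y); [reflexivity | intros B [] | exact HY].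
Qed.

End SuffixTransfer.

(** * The demand grammar *)

(* The nonterminals whose language depends on the slicing criterion. *)
Definition concrete (v : nt) : bool :=
  match v with Dc _ | Sg _ => true | Ds _ | Lf _ _ => false end.

Definition prod_shape (pr : prod) : Prop :=
  fst pr <> Sg None /\ tail_linear concrete (fst pr) (snd pr).

Section DemandProductions.

Variable mk : label -> nt.
Hypothesis mk_not_main : forall l, mk l <> Sg None.
Hypothesis mk_uniform : forall l l', concrete (mk l) = concrete (mk l').

Lemma link_shape l al l' : conc_free concrete al -> prod_shape (mk l, al ++ [Nt (mk l')]).
Proof.
  intros Hal. split; [apply mk_not_main | apply tail_linear_snoc; [exact Hal | apply mk_uniform]].
Qed.

Lemma call_prods_shape ls f args i pr : In pr (call_prods mk ls f i args) -> prod_shape pr.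
Proof.
  revert i; induction args as [|[li x] args IH]; simpl; intros i; [intros []|].
  intros [<-|H]; [|exact (IH _ H)].
  apply (link_shape li [Nt (Lf f i)]). now intros B [[= <-]|[]].
Qed.

Lemma app_prods_shape ls s pr : In pr (app_prods mk ls s) -> prod_shape pr.
Proof.
  destruct s; [..|apply call_prods_shape]; simpl;
    intros H; repeat destruct H as [<-|H]; try destruct H;
    apply (link_shape _ [Tm _]); now intros B [E|[]].
Qed.

Lemma expr_prods_shape tl e pr :
  (forall l, tail_linear concrete (mk l) tl) -> In pr (expr_prods mk tl e) -> prod_shape pr.
Proof.
  intros Htl. induction e as [l l1 x e1 IH1 e2 IH2|l x ls s e IH|l l1 x]; simpl.
  - intros [<-|[<-|H]].
    + split; [apply mk_not_main | apply Htl].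
    + split; [apply mk_not_main | apply tail_linear_cons_Tm, Htl].
    + apply in_app_or in H as [H|H]; auto.
  - intros [<-|H]; [split; [apply mk_not_main | apply Htl]|].
    rewrite !in_app_iff in H. destruct H as [H|[H|H]]; [|exact (app_prods_shape ls s pr H) | auto].
    apply in_map_iff in H as [y [<- _]]. apply (link_shape ls []). intros B [].
  - intros [<-|[<-|[]]]; split; [apply mk_not_main | apply Htl | apply mk_not_main | apply Htl].
Qed.

End DemandProductions.

Lemma param_prods_shape f body ps i pr : In pr (param_prods f body i ps) -> prod_shape pr.
Proof.
  revert i; induction ps as [|y ps IH]; simpl; intros i; [intros []|].
  intros H. apply in_app_or in H as [H|H]; [|exact (IH _ H)].
  apply in_map_iff in H as [p' [<- _]]. split; [discriminate|]. now intros B [[= <-]|[]].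
Qed.

Lemma grammar_nil_shape p A r : G p [] A r -> A <> Sg None /\ tail_linear concrete A r.
Proof.
  change (In (A, r) (grammar p []) -> prod_shape (A, r)). generalize (A, r) as pr.
  assert (Dc_tail : forall g l, tail_linear concrete (Dc l) [Nt (Sg g)])
    by (intros; now apply tail_linear_single).
  unfold grammar. intros pr H. rewrite !in_app_iff in H.
  destruct H as [H|[H|[H|[]]]].
  - apply in_concat in H as [prs [Hd H]]. apply in_map_iff in Hd as [d [<- _]].
    rewrite !in_app_iff in H. destruct H as [H|[H|H]].
    + exact (expr_prods_shape Dc ltac:(discriminate) (fun _ _ => eq_refl) _ _ _ (Dc_tail _) H).
    + refine (expr_prods_shape Ds ltac:(discriminate) (fun _ _ => eq_refl) _ _ _ _ H).
      intros l B [].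
    + exact (param_prods_shape _ _ _ _ _ H).
  - exact (expr_prods_shape Dc ltac:(discriminate) (fun _ _ => eq_refl) _ _ _ (Dc_tail _) H).
  - apply in_map_iff in H as [c [<- _]]. split; [discriminate | now apply tail_linear_single].
Qed.

Lemma grammar_split p sigma A r : G p sigma A r <->
  G p [] A r \/ (A = Sg None /\ exists s, In s sigma /\ r = map Tm s).
Proof.
  unfold G, grammar. rewrite !in_app_iff, (in_map_iff (fun s => (Sg None, map Tm s))).
  simpl. split.
  - intros [H|[H|[H|[s [[= <- <-] Hs]]]]]; try tauto. right. eauto.
  - intros [H|[-> [s [Hs ->]]]]; [tauto|]. right; right; right. eauto.
Qed.

Lemma grammar_layered p sigma A r : G p sigma A r -> nt_free r \/ tail_linear concrete A r.
Proof.
  intros H. apply grammar_split in H as [H|[_ [s [_ ->]]]].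
  - right. exact (proj2 (grammar_nil_shape p A r H)).
  - left. apply nt_free_map_Tm.
Qed.

Lemma grammar_agree p sigma1 sigma2 A r : A <> Sg None -> G p sigma1 A r <-> G p sigma2 A r.
Proof.
  intros HA. rewrite (grammar_split p sigma1), (grammar_split p sigma2).
  split; intros [H|[E _]]; tauto.
Qed.

Lemma grammar_main_nt_free p sigma r : G p sigma (Sg None) r -> nt_free r.
Proof.
  intros H. apply grammar_split in H as [H|[_ [s [_ ->]]]].
  - now destruct (grammar_nil_shape p _ r H).
  - apply nt_free_map_Tm.
Qed.

Lemma mn_grammar_agree p sigma1 sigma2 X r :
  fst X <> Sg None -> mn (G p sigma1) X r -> mn (G p sigma2) X r.
Proof.
  apply mn_agree.
  - apply grammar_agree.
  - apply grammar_main_nt_free.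
  - apply grammar_main_nt_free.
Qed.

Lemma mn_grammar_cases p s1 s2 X r : mn (G p [s1]) X r ->
  (X = (Sg None, false) /\ r = map Tm s1)
  \/ (mn (G p [s2]) X r /\ tail_linear (fun y => concrete (fst y)) X r).
Proof.
  intros H. destruct X as [A b].
  destruct (mn_cases _ concrete _ (grammar_layered p [s1]) _ _ H)
    as [[Hb [_ [r0 [Hr0 ->]]]]|[cA Hfree]]; simpl in *.
  - subst b. apply grammar_split in Hr0 as [Hr0|[-> [s [[<-|[]] ->]]]].
    + destruct (grammar_nil_shape p A r0 Hr0) as [HA Ht]. right. split.
      * now apply (mn_grammar_agree p [s1]).
      * now apply tail_linear_lift.
    + left. split; [reflexivity | apply lift_map_Tm].
  - right. split; [|unfold tail_linear; simpl; now rewrite cA].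
    apply (mn_grammar_agree p [s1]); [|exact H]. simpl. intros ->. discriminate.
Qed.

Lemma mn_grammar_main p s : mn (G p [s]) (Sg None, false) (map Tm s).
Proof.
  left. split; [reflexivity|]. split.
  - intros Hnl. apply (nonlinear_comp_nonconc _ concrete _ (grammar_layered p [s])) in Hnl.
    discriminate.
  - exists (map Tm s). split; [|symmetry; apply lift_map_Tm].
    apply grammar_split. right. split; [reflexivity|]. exists s. split; [now left | reflexivity].
Qed.

Lemma LM_suffix p s1 s2 pi w : LM p [s1] pi w -> exists k, w = k ++ s1 /\ LM p [s2] pi (k ++ s2).
Proof.
  apply (lang_conc_suffix _ (fun y => concrete (fst y)) (Sg None, false)); try reflexivity.
  - apply mn_grammar_cases.
  - apply mn_grammar_main.
Qed.

Lemma LM_singleton p s pi w : LM p [s] pi w <-> exists k, LM p [[]] pi k /\ w = k ++ s.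
Proof.
  split.
  - intros H. destruct (LM_suffix p s [] pi w H) as [k [-> Hk]].
    rewrite app_nil_r in Hk. eauto.
  - intros [k [Hk ->]]. destruct (LM_suffix p [] s pi k Hk) as [k' [-> Hk']].
    now rewrite app_nil_r.
Qed.

Theorem mainTheorem3 (p : program) (pi : label) :
  wf_program p -> In pi (prog_labels p) ->
  forall s : list bool,
    (exists a, simpL (LM p [map emb s] pi) a) <->
    (exists t u : list bool, s = t ++ u /\ Lcomp p pi t).
Proof.
  (* The identity holds for every program and label, well formed or not. *)
  intros _ _ s. unfold simpL, Lcomp, LA. split.
  - intros [a [w [Hw Ha]]]. apply LM_singleton in Hw as [k [Hk ->]].
    apply simp_app_canon in Ha as [c [Hc Ha]].
    destruct (canon_plain_bar k c Hc) as [u [q [-> [Hu Hq]]]].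
    rewrite <- app_assoc in Ha.
    assert (Hne : exists a, simp (q ++ map emb s) a)
      by (apply (simp_plain_app_nonempty u); [exact Hu | now exists a]).
    apply simp_bars_map_emb_nonempty in Hne as [t [u' [-> Ht]]]; [|exact Hq].
    exists t, u'. split; [reflexivity|].
    exists q, u. split; [exact Hq|]. split; [exact Hu|]. split; [now exists k | exact Ht].
  - intros [t [u' [-> [q [u [Hq [Hu [[k [Hk Hc]] Ht]]]]]]]].
    assert (Hne : exists a, simp (q ++ map emb (t ++ u')) a)
      by (apply simp_bars_map_emb_nonempty; eauto).
    apply (simp_plain_app_nonempty u) in Hne as [a Ha]; [|exact Hu].
    exists a, (k ++ map emb (t ++ u')). split.
    + apply LM_singleton. eauto.
    + apply simp_app_canon. exists (u ++ q). split; [exact Hc|]. now rewrite <- app_assoc.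
Qed.
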